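(* Let $n$ be a positive odd integer. Then, modulo $(1-aq^n)(a-q^n)$, $$ \sum_{k=0}^{n-1}\frac{(aq;q^2)_k\,(q/a;q^2)_k}{(q^2;q^2)_k^2}\, x^k \equiv (-1)^{(n-1)/2}q^{(1-n^2)/4} \sum_{k=0}^{n-1}\frac{(aq;q^2)_k\,(q/a;q^2)_k}{(q^2;q^2)_k^2}\, q^{2k}\,(x;q^2)_k. $$
   Context: $a,q,x$ are indeterminates. The $q$-shifted factorial is $(y;q)_0=1$ and $(y;q)_m=(1-y)(1-yq)\cdots(1-yq^{m-1})$ for $m\geqslant1$. For rational functions $A,B$ and a polynomial $P$, $A\equiv B\pmod P$ means $A-B=P\cdot C/D$ for polynomials $C,D$ with $D$ coprime to $P$. *)

From HB Require Import structures.
From mathcomp Require Import all_boot all_order all_algebra.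
Set Implicit Arguments. Unset Strict Implicit. Unset Printing Implicit Defensive.
Import GRing.Theory.
Local Open Scope ring_scope.

(* Polynomial ring Q[a,q,x]: innermost variable a, then q, outermost x. *)
Definition Rp := {poly {poly {poly rat}}}.
Definition Kf := {fraction Rp}.

Definition pa : Rp := ('X%:P)%:P.
Definition pq : Rp := ('X)%:P.
Definition px : Rp := 'X.

Definition fa : Kf := tofrac pa.
Definition fq : Kf := tofrac pq.
Definition fx : Kf := tofrac px.

Definition qpoch (F : nzRingType) (y q : F) (m : nat) : F :=
  \prod_(i < m) (1 - y * q ^+ i).

Definition divR (g p : Rp) : Prop := exists h : Rp, p = h * g.

Definition coprimeR (D P : Rp) : Prop :=
  forall g : Rp, divR g D -> divR g P -> g \is a GRing.unit.

Definition eqmodR (A B : Kf) (P : Rp) : Prop :=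
  exists C D : Rp, D != 0 /\ coprimeR D P /\
    A - B = tofrac P * tofrac C / tofrac D.

(* Put t = a + 1/a.  Since (aq;q^2)_k (q/a;q^2)_k = prod_{i<k} (1 - q^(2i+1) t + q^(4i+2))
   is a polynomial in t, both sides of the congruence are polynomials in t whose
   coefficients have denominators dividing a power of D = a q (q^2;q^2)_n.  At
   t0 = q^n + q^-n, i.e. at a = q^n, the identity holds exactly: with p = q^2 and
   n = 2m+1 the coefficients become (p^-m;p)_k (p^(m+1);p)_k / (p;p)_k^2, and expanding
   (x;p)_k by the q-binomial theorem reduces it to q-Chu-Vandermonde.  Hence the difference
   is (t - t0) g with g of bounded denominator, and t - t0 = -(1 - a q^n)(a - q^n)/(a q^n).
   Finally D is coprime to the modulus: specialising q to the integers s >= 2 shows that a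
   common divisor does not involve a, and then it divides both -q^n and (1 - q^n)^2, which
   generate the unit ideal of Q[q]. *)

From HB Require Import structures.
From mathcomp Require Import all_boot all_order all_algebra.
From mathcomp Require Import ring zify.
Import Order.TTheory GRing.Theory Num.Theory.
Set Implicit Arguments. Unset Strict Implicit. Unset Printing Implicit Defensive.
Local Open Scope ring_scope.

Arguments qpoch : simpl never.

Section QPochhammer.
Variable R : comNzRingType.
Implicit Types (y q : R).

Lemma qpoch0 y q : qpoch y q 0 = 1.
Proof. by rewrite /qpoch big_ord0. Qed.

Lemma qpochS y q k : qpoch y q k.+1 = qpoch y q k * (1 - y * q ^+ k).
Proof. by rewrite /qpoch big_ord_recr. Qed.

Lemma qpochSl y q k : qpoch y q k.+1 = (1 - y) * qpoch (y * q) q k.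
Proof.
rewrite /qpoch big_ord_recl expr0 mulr1; congr (_ * _).
by apply: eq_bigr => i _; rewrite /bump /= exprS mulrA.
Qed.

Lemma qpochD y q j l : qpoch y q (j + l) = qpoch y q j * qpoch (y * q ^+ j) q l.
Proof.
rewrite /qpoch big_split_ord /=; congr (_ * _).
by apply: eq_bigr => i _; rewrite exprD mulrA.
Qed.

Lemma qpoch_eq0 y q k i : (i < k)%N -> y * q ^+ i = 1 -> qpoch y q k = 0.
Proof. by move=> ik yqi; rewrite /qpoch (bigD1 (Ordinal ik)) //= yqi subrr mul0r. Qed.

Lemma rmorph_qpoch (S : comNzRingType) (f : {rmorphism R -> S}) y q k :
  f (qpoch y q k) = qpoch (f y) (f q) k.
Proof.
rewrite rmorph_prod; apply: eq_bigr => i _.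
by rewrite rmorphB rmorph1 rmorphM rmorphXn.
Qed.

End QPochhammer.

Lemma qpoch_neq0 (R : idomainType) (y q : R) k :
  (forall i, (i < k)%N -> y * q ^+ i != 1) -> qpoch y q k != 0.
Proof.
by move=> yq; apply/prodf_neq0 => i _; rewrite subr_eq0 eq_sym yq.
Qed.

Lemma qpoch_neq0_le (R : idomainType) (y q : R) k K :
  (k <= K)%N -> qpoch y q K != 0 -> qpoch y q k != 0.
Proof. by move=> kK; rewrite -(subnKC kK) qpochD mulf_eq0 negb_or => /andP[]. Qed.

Section TerminatingTransform.
Variable F : fieldType.
Variable q : F.
Hypothesis q_neq0 : q != 0.
Hypothesis q_not_root1 : forall k, (0 < k)%N -> q ^+ k != 1.

Lemma q_subr_neq0 k : 1 - q * q ^+ k != 0.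
Proof. by rewrite subr_eq0 eq_sym -exprS q_not_root1. Qed.

Lemma qpoch_qq_neq0 k : qpoch q q k != 0.
Proof. by apply: qpoch_neq0 => i _; rewrite -exprS q_not_root1. Qed.

Lemma qpoch_qqX_neq0 j k : qpoch (q * q ^+ j) q k != 0.
Proof. by apply: qpoch_neq0 => i _; rewrite -exprS -exprD q_not_root1. Qed.

Definition qchu_coef N l := qpoch (q^-1 ^+ N) q l * q ^+ l / qpoch q q l.

Lemma qchu_coef0 N : qchu_coef N 0 = 1.
Proof. by rewrite /qchu_coef !qpoch0 expr0 mulr1 divr1. Qed.

Lemma qchu_coefS N l :
  qchu_coef N.+1 l.+1 = qchu_coef N l.+1 - q^-1 ^+ N * qchu_coef N l.
Proof.
rewrite /qchu_coef (qpochSl (q^-1 ^+ N.+1)) (qpochS (q^-1 ^+ N)) (qpochS q).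
have -> : q^-1 ^+ N.+1 * q = q^-1 ^+ N by rewrite exprSr -mulrA mulVf // mulr1.
have := qpoch_qq_neq0 l; have := q_subr_neq0 l.
by rewrite exprSr exprS => h1 h2; field; apply/and3P.
Qed.

(* q-Chu-Vandermonde: 2phi1(q^-N, b; c; q, q) = b^N (c/b;q)_N / (c;q)_N. *)
Lemma qChu_Vandermonde N K b c : (N < K)%N -> qpoch c q K != 0 ->
  \sum_(l < K) qchu_coef N l * (qpoch b q l / qpoch c q l)
  = (\prod_(i < N) (b - c * q ^+ i)) / qpoch c q N.
Proof.
elim: N K b c => [|N IH] [|K] // b c NK cK.
  rewrite big_ord0 qpoch0 divr1 big_ord_recl /= qchu_coef0 !qpoch0 divr1 mulr1.
  by rewrite big1 ?addr0 // => i _; rewrite /qchu_coef qpochSl expr0 subrr !mul0r.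
move: (cK); rewrite qpochSl mulf_eq0 negb_or => /andP[c1 cqK].
rewrite [in LHS]big_ord_recl /= qchu_coef0 !qpoch0 divr1 mul1r.
under eq_bigr => i _ do rewrite /bump /= qchu_coefS mulrBl.
rewrite sumrB addrA.
have -> : 1 + \sum_(i < K) qchu_coef N i.+1 * (qpoch b q i.+1 / qpoch c q i.+1)
    = \sum_(l < K.+1) qchu_coef N l * (qpoch b q l / qpoch c q l).
  by rewrite big_ord_recl qchu_coef0 !qpoch0 divr1 mul1r.
have -> : \sum_(i < K) q^-1 ^+ N * qchu_coef N i * (qpoch b q i.+1 / qpoch c q i.+1)
    = q^-1 ^+ N * ((1 - b) / (1 - c)) *
      \sum_(l < K) qchu_coef N l * (qpoch (b * q) q l / qpoch (c * q) q l).
  rewrite mulr_sumr; apply: eq_bigr => i _; rewrite !qpochSl.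
  have := qpoch_neq0_le (ltnW (ltn_ord i)) cqK.
  by move=> ?; field; apply/andP.
rewrite !IH //; last by rewrite ltnW.
have -> : \prod_(i < N) (b * q - c * q * q ^+ i)
    = q ^+ N * \prod_(i < N) (b - c * q ^+ i).
  have -> : q ^+ N = \prod_(i < N) q by rewrite prodr_const card_ord.
  rewrite -big_split /=.
  by apply: eq_bigr => i _; ring.
have -> : qpoch (c * q) q N = qpoch c q N * (1 - c * q ^+ N) / (1 - c).
  by apply: (mulfI c1); rewrite -qpochSl qpochS; field.
move: (qpoch_neq0_le (ltnW NK) cK); rewrite qpochS mulf_eq0 negb_or => /andP[cN cN1].
rewrite big_ord_recr /= exprVn.
by field; rewrite cN cN1 c1 expf_neq0.
Qed.

(* The coefficient of y^j in (y;q)_k. *)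
Fixpoint qbin_coef (k j : nat) : F :=
  match k with
  | 0 => (j == 0)%:R
  | k'.+1 => qbin_coef k' j - q ^+ k' * (if j is j'.+1 then qbin_coef k' j' else 0)
  end.

Lemma qbin_coef_eq0 k j : (k < j)%N -> qbin_coef k j = 0.
Proof. by elim: k j => [|k IH] [|j] //= kj; rewrite !IH ?mulr0 ?subr0 // ltnW. Qed.

Lemma qpoch_expand k K y : (k < K)%N ->
  qpoch y q k = \sum_(j < K) qbin_coef k j * y ^+ j.
Proof.
elim: k K => [|k IH] [|K] // kK.
  by rewrite qpoch0 big_ord_recl /= big1 ?addr0 ?mulr1 // => i _; rewrite mul0r.
rewrite qpochS (IH K.+1 (ltnW kK)); symmetry.
under eq_bigr => j _ do rewrite /= mulrBl.
rewrite sumrB mulrBr mulr1; congr (_ - _).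
rewrite big_ord_recl /= mulr0 mul0r add0r mulr_suml big_ord_recr /=.
rewrite qbin_coef_eq0 // !mul0r addr0; apply: eq_bigr => i _.
by rewrite /bump /= exprS; ring.
Qed.

Lemma qbin_coefE k j : (j <= k)%N ->
  qbin_coef k j = (-1) ^+ j * q ^+ 'C(j, 2) * qpoch q q k / (qpoch q q j * qpoch q q (k - j)).
Proof.
elim: k j => [|k IH] [|j] //= jk.
- by rewrite !qpoch0 expr0 !mul1r invr1.
- rewrite IH // !subn0 !qpoch0 !expr0 !mul1r mulr0 subr0.
  by rewrite divff ?divff // qpoch_qq_neq0.
have qk := qpoch_qq_neq0 k.
move: jk; rewrite ltnS leq_eqVlt => /orP[/eqP ->|jk].
  rewrite qbin_coef_eq0 // sub0r subnn (IH k) // subnn !qpoch0 mulr1 binS bin1.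
  by rewrite !exprD exprS; field; rewrite qk qpoch_qq_neq0.
rewrite (IH j.+1 jk) (IH j (ltnW jk)) subSS.
set s := (k - j.+1)%N.
have ek : k = (j.+1 + s)%N by rewrite subnKC.
have -> : (k - j = s.+1)%N by rewrite ek addSn subSn ?leq_addr // addKn.
rewrite !qpochS binS bin1 exprD exprS.
have -> : q ^+ k = q ^+ j * q * q ^+ s by rewrite ek addSn exprS exprD; ring.
have := qpoch_qq_neq0 j; have := qpoch_qq_neq0 s.
have := q_subr_neq0 j; have := q_subr_neq0 s.
by move=> *; field; apply/and4P.
Qed.

(* At a = q^n the coefficients of the theorem become these, with q^2 in place of q. *)
Definition terminating_coef m k :=
  qpoch (q^-1 ^+ m) q k * qpoch (q ^+ m.+1) q k / qpoch q q k ^+ 2.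

Lemma terminating_coef_eq0 m k : (m < k)%N -> terminating_coef m k = 0.
Proof.
move=> mk; rewrite /terminating_coef (qpoch_eq0 mk) ?mul0r //.
by rewrite exprVn mulVf // expf_neq0.
Qed.

Lemma prod_oppr_qX j N :
  \prod_(i < N) - q ^+ (j.+1 + i) = (-1) ^+ N * q ^+ (N * j.+1 + 'C(N, 2)).
Proof.
elim: N => [|N IH]; first by rewrite big_ord0 expr0 mul1r.
rewrite big_ord_recr /= IH binS bin1 exprS.
have -> : (N.+1 * j.+1 + ('C(N, 2) + N) = N * j.+1 + 'C(N, 2) + (j.+1 + N))%N.
  by rewrite mulSn; lia.
by rewrite [in RHS]exprD; ring.
Qed.

Lemma bin2_add j N : ('C(j, 2) + j + (N * j.+1 + 'C(N, 2)) = 'C((j + N).+1, 2))%N.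
Proof.
elim: N => [|N IH]; first by rewrite mul0n add0n bin0n !addn0 binS bin1.
by rewrite addnS (binS (j + N).+1) bin1 -IH binS bin1 mulSn; lia.
Qed.

Lemma qChu_prod_terminating j N :
  \prod_(i < N) (q ^+ (j + N).+1 * q ^+ j - q * q ^+ j * q ^+ i)
  = (-1) ^+ N * q ^+ (N * j.+1 + 'C(N, 2)) * qpoch (q * q ^+ j) q N.
Proof.
rewrite -prod_oppr_qX /qpoch [X in _ = _ * X](reindex_inj rev_ord_inj) /=.
rewrite -big_split /=; apply: eq_bigr => i _.
have iN := ltn_ord i.
rewrite -exprD (_ : (j + N).+1 + j = j.+1 + i + (j + (N - i.+1)).+1)%N; last by lia.
rewrite exprD.
have -> : q * q ^+ j * q ^+ (N - i.+1) = q ^+ (j + (N - i.+1)).+1.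
  by rewrite exprS exprD mulrA.
have -> : q * q ^+ j * q ^+ i = q ^+ (j.+1 + i) by rewrite exprD exprS.
ring.
Qed.

Lemma terminating_coef_qbin_sum m j K : (j <= m)%N -> (m < K)%N ->
  (-1) ^+ m / q ^+ 'C(m.+1, 2) *
    \sum_(k < K) terminating_coef m k * q ^+ k * qbin_coef k j = terminating_coef m j.
Proof.
move=> jm mK; have jK : (j <= K)%N by lia.
move: (subnKC jm); set N := (m - j)%N => em; rewrite -em in mK *.
rewrite -(subnKC jK) big_split_ord /= big1 ?add0r; last first.
  by move=> i _; rewrite qbin_coef_eq0 ?mulr0.
set b := q ^+ (j + N).+1 * q ^+ j; set c := q * q ^+ j.
have shift l : terminating_coef (j + N) (j + l) * q ^+ (j + l) * qbin_coef (j + l) j =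
   terminating_coef (j + N) j * ((-1) ^+ j * q ^+ 'C(j, 2) * q ^+ j) *
   (qchu_coef N l * (qpoch b q l / qpoch c q l)).
  rewrite (qbin_coefE (leq_addr l j)) addKn /terminating_coef /qchu_coef !qpochD.
  have -> : q^-1 ^+ (j + N) * q ^+ j = q^-1 ^+ N.
    by rewrite addnC exprD -mulrA -exprMn mulVf // expr1n mulr1.
  rewrite (exprD q j l) -/b -/c.
  have := qpoch_qq_neq0 j; have := qpoch_qq_neq0 l; have := qpoch_qqX_neq0 j l.
  by move=> *; field; apply/and3P.
under eq_bigr => l _ do rewrite shift.
rewrite -mulr_sumr qChu_Vandermonde ?qpoch_qqX_neq0 //; last by lia.
rewrite qChu_prod_terminating -bin2_add !exprD.
have := qpoch_qqX_neq0 j N => cN.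
have sign k : (-1) ^+ k * (-1) ^+ k = 1 :> F by rewrite -exprMn mulrNN mulr1 expr1n.
transitivity ((-1) ^+ j * (-1) ^+ j * ((-1) ^+ N * (-1) ^+ N) *
              terminating_coef (j + N) j); last by rewrite !sign !mul1r.
by field; rewrite cN !expf_neq0.
Qed.

Lemma terminating_transform m K y : (m < K)%N ->
  \sum_(k < K) terminating_coef m k * y ^+ k =
  (-1) ^+ m / q ^+ 'C(m.+1, 2) *
    \sum_(k < K) terminating_coef m k * q ^+ k * qpoch y q k.
Proof.
move=> mK.
have expand (k : 'I_K) : terminating_coef m k * q ^+ k * qpoch y q k =
    \sum_(j < K) terminating_coef m k * q ^+ k * qbin_coef k j * y ^+ j.
  by rewrite (qpoch_expand _ (ltn_ord k)) mulr_sumr; apply: eq_bigr => j _; ring.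
rewrite (eq_bigr _ (fun k _ => expand k)) exchange_big mulr_sumr /=.
apply: eq_bigr => j _; rewrite -mulr_suml mulrA.
have [jm|mj] := leqP j m; first by rewrite terminating_coef_qbin_sum.
rewrite terminating_coef_eq0 // mul0r big1 ?mulr0 ?mul0r // => k _.
have [km|mk] := leqP k m; last by rewrite terminating_coef_eq0 ?mul0r.
by rewrite qbin_coef_eq0 ?mulr0 //; apply: leq_ltn_trans mj.
Qed.

End TerminatingTransform.

Section CongruenceOverSubring.
Variable R : comNzRingType.
Variable S : R -> Prop.
Hypothesis S0 : S 0.
Hypothesis S1 : S 1.
Hypothesis SB : forall u v, S u -> S v -> S (u - v).
Hypothesis SM : forall u v, S u -> S v -> S (u * v).
Variable d : R.

Lemma subring_opp u : S u -> S (- u).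
Proof. by rewrite -sub0r; apply: SB. Qed.

Lemma subring_add u v : S u -> S v -> S (u + v).
Proof. by move=> Su Sv; rewrite -[v]opprK; apply/SB/subring_opp. Qed.

Lemma subring_prod k (F : 'I_k -> R) : (forall i, S (F i)) -> S (\prod_(i < k) F i).
Proof. by move=> SF; apply: big_ind. Qed.

Definition congr_mod u v := exists2 g, S g & u - v = d * g.

Lemma congr_mod_refl u : congr_mod u u.
Proof. by exists 0; rewrite // subrr mulr0. Qed.

Lemma congr_mod_sym u v : congr_mod u v -> congr_mod v u.
Proof. by case=> g Sg uv; exists (- g); [exact: subring_opp | rewrite mulrN -uv opprB]. Qed.

Lemma congr_mod_trans u v w : congr_mod u v -> congr_mod v w -> congr_mod u w.
Proof.
case=> g Sg uv [g' Sg' vw]; exists (g + g'); first exact: subring_add.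
by rewrite mulrDr -uv -vw addrA subrK.
Qed.

Lemma congr_mod_add u v u' v' :
  congr_mod u v -> congr_mod u' v' -> congr_mod (u + u') (v + v').
Proof.
case=> g Sg uv [g' Sg' uv']; exists (g + g'); first exact: subring_add.
by rewrite mulrDr -uv -uv'; ring.
Qed.

Lemma congr_mod_mul u v u' v' : S u' -> S v ->
  congr_mod u v -> congr_mod u' v' -> congr_mod (u * u') (v * v').
Proof.
move=> Su' Sv [g Sg uv] [g' Sg' uv']; exists (g * u' + v * g').
  by apply: subring_add; apply: SM.
by rewrite mulrDr mulrA -uv mulrCA -uv'; ring.
Qed.

Lemma congr_mod_sum k (F G : 'I_k -> R) :
  (forall i, congr_mod (F i) (G i)) -> congr_mod (\sum_(i < k) F i) (\sum_(i < k) G i).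
Proof.
elim: k F G => [|k IH] F G FG; first by rewrite !big_ord0; apply: congr_mod_refl.
by rewrite !big_ord_recr /=; apply: congr_mod_add => //; apply: IH.
Qed.

Lemma congr_mod_prod k (F G : 'I_k -> R) :
  (forall i, S (F i)) -> (forall i, S (G i)) ->
  (forall i, congr_mod (F i) (G i)) -> congr_mod (\prod_(i < k) F i) (\prod_(i < k) G i).
Proof.
elim: k F G => [|k IH] F G SF SG FG; first by rewrite !big_ord0; apply: congr_mod_refl.
rewrite !big_ord_recr /=; apply: congr_mod_mul => //; first exact: subring_prod.
exact: IH.
Qed.

End CongruenceOverSubring.

Section BoundedDenominators.
Variables (R : idomainType) (D : R).
Implicit Types (u v : {fraction R}).

Definition denom_bounded u := exists (c : R) (j : nat), u * tofrac D ^+ j = tofrac c.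

Lemma denom_bounded_tofrac c : denom_bounded (tofrac c).
Proof. by exists c, 0%N; rewrite mulr1. Qed.

Lemma denom_bounded0 : denom_bounded 0.
Proof. by rewrite -tofrac0; apply: denom_bounded_tofrac. Qed.

Lemma denom_bounded1 : denom_bounded 1.
Proof. by rewrite -tofrac1; apply: denom_bounded_tofrac. Qed.

Lemma denom_boundedB u v : denom_bounded u -> denom_bounded v -> denom_bounded (u - v).
Proof.
case=> [c [j uc]] [c' [j' vc]]; exists (c * D ^+ j' - c' * D ^+ j), (j + j')%N.
by rewrite tofracB !tofracM !tofracXn -uc -vc exprD; ring.
Qed.

Lemma denom_boundedD u v : denom_bounded u -> denom_bounded v -> denom_bounded (u + v).
Proof.
case=> [c [j uc]] [c' [j' vc]]; exists (c * D ^+ j' + c' * D ^+ j), (j + j')%N.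
by rewrite tofracD !tofracM !tofracXn -uc -vc exprD; ring.
Qed.

Lemma denom_boundedM u v : denom_bounded u -> denom_bounded v -> denom_bounded (u * v).
Proof.
case=> [c [j uc]] [c' [j' vc]]; exists (c * c'), (j + j')%N.
by rewrite tofracM -uc -vc exprD; ring.
Qed.

Lemma denom_boundedX u k : denom_bounded u -> denom_bounded (u ^+ k).
Proof.
move=> bu; elim: k => [|k IH]; first exact: denom_bounded1.
by rewrite exprS; apply: denom_boundedM.
Qed.

Lemma denom_bounded_qpoch y q k :
  denom_bounded y -> denom_bounded q -> denom_bounded (qpoch y q k).
Proof.
move=> By Bq; apply: (subring_prod denom_bounded1 denom_boundedM) => i.
by apply: denom_boundedB denom_bounded1 _; apply/denom_boundedM/denom_boundedX.
Qed.

Lemma denom_bounded_inv u v :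
  u != 0 -> tofrac D = u * v -> denom_bounded v -> denom_bounded u^-1.
Proof.
move=> u0 Duv [c [j vc]]; exists c, j.+1.
by rewrite exprS mulrA {1}Duv mulrA mulVf // mul1r.
Qed.

End BoundedDenominators.

Section SymmetricForm.
Variables (F : fieldType) (q : F).
Local Notation p := (q ^+ 2).

Definition pair_qpoch T k := \prod_(i < k) (1 - q * p ^+ i * T + p * (p ^+ i) ^+ 2).

Lemma pair_qpochE a k : a != 0 ->
  qpoch (a * q) p k * qpoch (q / a) p k = pair_qpoch (a + a^-1) k.
Proof.
move=> a0; rewrite /qpoch /pair_qpoch -big_split /=; apply: eq_bigr => i _.
by field.
Qed.

Lemma sum_pair_qpochE a x n : a != 0 ->
  \sum_(k < n) qpoch (a * q) p k * qpoch (q / a) p k / qpoch p p k ^+ 2 * x ^+ k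
  = \sum_(k < n) pair_qpoch (a + a^-1) k * ((qpoch p p k ^+ 2)^-1 * x ^+ k).
Proof. by move=> a0; apply: eq_bigr => k _; rewrite pair_qpochE // mulrA. Qed.

Lemma sum_pair_qpochE_shifted a x n : a != 0 ->
  \sum_(k < n) qpoch (a * q) p k * qpoch (q / a) p k / qpoch p p k ^+ 2 * q ^+ (2 * k)
                 * qpoch x p k
  = \sum_(k < n) pair_qpoch (a + a^-1) k *
                 ((qpoch p p k ^+ 2)^-1 * (q ^+ (2 * k) * qpoch x p k)).
Proof. by move=> a0; apply: eq_bigr => k _; rewrite pair_qpochE // !mulrA. Qed.

Lemma pair_qpoch_factor_sub T T0 i :
  (1 - q * p ^+ i * T + p * (p ^+ i) ^+ 2) - (1 - q * p ^+ i * T0 + p * (p ^+ i) ^+ 2)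
  = (T - T0) * - (q * p ^+ i).
Proof. ring. Qed.

Lemma sym_sub_qX a n : a != 0 -> q != 0 ->
  a + a^-1 - (q ^+ n + (q ^+ n)^-1) = - ((1 - a * q ^+ n) * (a - q ^+ n)) / (a * q ^+ n).
Proof. by move=> a0 q0; field; rewrite a0 expf_neq0. Qed.

Hypothesis q_neq0 : q != 0.
Hypothesis q_not_root1 : forall k, (0 < k)%N -> q ^+ k != 1.
Variables (m n : nat).
Hypothesis n_odd : n = m.*2.+1.

Lemma pair_qpoch_qX k :
  pair_qpoch (q ^+ n + (q ^+ n)^-1) k = qpoch (p^-1 ^+ m) p k * qpoch (p ^+ m.+1) p k.
Proof.
rewrite /qpoch /pair_qpoch -big_split /=; apply: eq_bigr => i _.
have -> : q ^+ n = q * p ^+ m by rewrite n_odd exprS -mul2n exprM.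
by rewrite exprVn (exprS p m); field; rewrite q_neq0 !expf_neq0.
Qed.

Lemma pair_qpoch_transform (x : F) :
  \sum_(k < n) pair_qpoch (q ^+ n + (q ^+ n)^-1) k * ((qpoch p p k ^+ 2)^-1 * x ^+ k) =
  (-1) ^+ m / q ^+ (2 * 'C(m.+1, 2)) *
  \sum_(k < n) pair_qpoch (q ^+ n + (q ^+ n)^-1) k *
                 ((qpoch p p k ^+ 2)^-1 * (q ^+ (2 * k) * qpoch x p k)).
Proof.
have p_not_root1 k : (0 < k)%N -> p ^+ k != 1.
  by move=> k0; rewrite -exprM q_not_root1 // muln_gt0.
have mn : (m < n)%N by rewrite n_odd ltnS -addnn leq_addr.
under eq_bigr => k _ do rewrite pair_qpoch_qX mulrA.
under [in RHS]eq_bigr => k _ do rewrite pair_qpoch_qX exprM !mulrA.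
by rewrite exprM terminating_transform ?expf_neq0.
Qed.

End SymmetricForm.

Lemma coef_horner_polyC (R : comNzRingType) (g : {poly {poly R}}) (c : R) r :
  (g.[c%:P])`_r = (map_poly (coefp r) g).[c].
Proof.
rewrite horner_coef (horner_coef_wide _ (size_poly _ _)) coef_sum.
by apply: eq_bigr => i _; rewrite -rmorphXn coefMC coef_map.
Qed.

Lemma poly_nat_roots_eq0 (R : numDomainType) (g : {poly R}) :
  (forall k, (1 < k)%N -> g.[k%:R] = 0) -> g = 0.
Proof.
move=> groots; apply/eqP; apply: contraT => g0.
have := max_poly_roots g0 (rs := [seq (k + 2)%:R | k <- iota 0 (size g)]).
rewrite size_map size_iota ltnn; apply.
  by apply/allP => z /mapP[k _ ->]; apply/eqP/groots; rewrite addn2.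
by rewrite map_inj_uniq ?iota_uniq // => i j /eqP; rewrite eqr_nat eqn_add2r => /eqP.
Qed.

Lemma const_evals_map_polyC (R : numDomainType) (g : {poly {poly R}}) :
  (forall s, (1 < s)%N -> size g.[s%:R%:P] = 1) -> g = map_poly polyC (map_poly (coefp 0) g).
Proof.
move=> size_at; apply/polyP => i; rewrite coef_map_id0 // coef_map /=.
apply: size1_polyC; apply/leq_sizeP => r r0.
suff /(congr1 (coefp i)) : map_poly (coefp r) g = 0 by rewrite /= coef_map_id0 ?coef0.
apply: poly_nat_roots_eq0 => s s1.
by rewrite -coef_horner_polyC nth_default // size_at.
Qed.

Lemma size_dvdp_Xn (K : fieldType) (f h : {poly K}) (c : K) j :
  c != 0 -> h * f = 'X ^+ j * c%:P -> ~~ root f 0 -> size f = 1.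
Proof.
move=> c0 hf f0; apply/eqP; rewrite -coprimepp.
have fXj : f %| 'X ^+ j.
  by apply/dvdpP; exists (h * (c^-1)%:P); rewrite mulrAC hf -mulrA -polyCM divff ?mulr1.
apply: coprimep_dvdl fXj _; apply: coprimep_expr.
by rewrite -[X in coprimep _ X]subr0 -polyC0 coprimep_XsubC.
Qed.

Definition denom_poly n : Rp := pa * pq * qpoch (pq ^+ 2) (pq ^+ 2) n.

Section CoprimeDenominator.
Variable n : nat.
Local Notation R2 := {poly {poly rat}}.
(* The x-free modulus and denominator, in Q[a][q]: q is now the outer variable. *)
Let a2 : R2 := 'X%:P.
Let q2 : R2 := 'X.
Let P2 : R2 := (1 - a2 * q2 ^+ n) * (a2 - q2 ^+ n).
Let D2 : R2 := a2 * q2 * qpoch (q2 ^+ 2) (q2 ^+ 2) n.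

Lemma nat_qpoch_neq0 (s : nat) : (1 < s)%N ->
  s%:R * qpoch (s%:R ^+ 2) (s%:R ^+ 2) n != 0 :> rat.
Proof.
move=> s1; apply: mulf_neq0; first by rewrite pnatr_eq0 -lt0n (ltn_trans _ s1).
by apply: qpoch_neq0 => i _; rewrite -exprS -exprM gt_eqF // exprn_egt1 ?ltr1n.
Qed.

Lemma P2_at_a0 (s : rat) : (P2.[s%:P]).[0] = - s ^+ n.
Proof. by rewrite /P2 /a2 /q2 !hornerE. Qed.

Lemma D2_at (s : rat) :
  D2.[s%:P] = 'X * (s * qpoch (s ^+ 2) (s ^+ 2) n)%:P.
Proof.
rewrite /D2 /a2 /q2 /qpoch !hornerE horner_prod polyCM rmorph_prod /= mulrA.
congr (_ * _); apply: eq_bigr => i _.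
by rewrite !hornerE rmorphB rmorph1 rmorphM !rmorphXn.
Qed.

Lemma common_divisor_P2_D2_const (g h0 h1 : R2) j :
  P2 = h0 * g -> D2 ^+ j = h1 * g -> exists2 c : rat, c != 0 & g = (c%:P)%:P.
Proof.
move=> Pg Dg.
have size_at s : (1 < s)%N -> size g.[s%:R%:P] = 1.
  move=> s1; pose c : rat := s%:R * qpoch (s%:R ^+ 2) (s%:R ^+ 2) n.
  have c0 := nat_qpoch_neq0 s1.
  apply: (@size_dvdp_Xn _ _ h1.[s%:R%:P] (c ^+ j) j); first exact: expf_neq0.
    by rewrite -hornerM -Dg horner_exp D2_at exprMn rmorphXn.
  apply: contraTN isT => /rootP g0.
  move: (P2_at_a0 s%:R); rewrite Pg !hornerM g0 mulr0 => /eqP.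
  by rewrite eq_sym oppr_eq0 expf_eq0 pnatr_eq0 andbC /= gtn_eqF // (ltn_trans _ s1).
have gG := const_evals_map_polyC size_at; set G := map_poly (coefp 0) g in gG.
have eval_a z : map_poly (horner_eval z) g = G.
  by rewrite gG -map_poly_comp; apply: map_poly_id => c _; rewrite /= /horner_eval hornerC.
have at_a z : map_poly (horner_eval z) P2 = map_poly (horner_eval z) h0 * G.
  by rewrite Pg rmorphM /= eval_a.
move: (at_a 0) (at_a 1); rewrite /P2 /a2 /q2.
rewrite !(rmorphB, rmorphM, rmorph1, rmorphXn) /= !map_polyX !map_polyC /= /horner_eval !hornerX.
rewrite polyC0 polyC1 mul0r mul1r subr0 sub0r.
set u0 := map_poly _ h0; set u1 := map_poly _ h0 => e0 e1.
have unitG : (u1 - u0 * (2%:R - 'X ^+ n)) * G = 1.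
  by rewrite mulrBl -e1 mulrAC -e0; ring.
have := size_mul_eq1 (u1 - u0 * (2%:R - 'X ^+ n)) G.
rewrite unitG size_poly1 eqxx => /esym/andP[_ /size_poly1P[c c0 Gc]].
by exists c => //; rewrite gG Gc map_polyC.
Qed.

Lemma coprimeR_denom_poly j :
  coprimeR (denom_poly n ^+ j) ((1 - pa * pq ^+ n) * (pa - pq ^+ n)).
Proof.
move=> g [h1 Dg] [h0 Pg].
have P2_neq0 : P2 != 0.
  apply/eqP => P20; have := P2_at_a0 1; rewrite P20 !horner0 expr1n => /eqP.
  by rewrite eq_sym oppr_eq0 oner_eq0.
have Dn : denom_poly n = D2%:P.
  by rewrite /denom_poly /D2 /pa /pq /a2 /q2 !rmorphM rmorph_qpoch rmorphXn.
have Pn : (1 - pa * pq ^+ n) * (pa - pq ^+ n) = P2%:P.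
  by rewrite /P2 /pa /pq /a2 /q2 !(rmorphM, rmorphB, rmorph1, rmorphXn).
rewrite Pn in Pg; rewrite Dn -rmorphXn in Dg.
have := size_mul_eq1 h0 g; rewrite -Pg size_polyC P2_neq0 eqxx.
move=> /esym/andP[/size_poly1P[c0 _ h0c] /size_poly1P[g0 _ gg0]].
rewrite h0c gg0 -polyCM in Pg; move/polyC_inj: Pg => Pg.
have /(congr1 (coefp 0)) : (D2 ^+ j)%:P = h1 * g0%:P by rewrite -gg0.
rewrite /= coefC coefMC => Dg0.
have [c c_neq0 g0c] := common_divisor_P2_D2_const Pg Dg0.
by rewrite gg0 g0c !rmorph_unit // unitfE.
Qed.

End CoprimeDenominator.

Lemma fq_neq0 : fq != 0.
Proof. by rewrite tofrac_eq0 polyC_eq0 polyX_eq0. Qed.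

Lemma fa_neq0 : fa != 0.
Proof. by rewrite tofrac_eq0 !polyC_eq0 polyX_eq0. Qed.

Lemma fqX_neq1 k : (0 < k)%N -> fq ^+ k != 1.
Proof.
move=> k0; rewrite -rmorphXn -tofrac1 tofrac_eq -rmorphXn -(rmorph1 polyC).
rewrite (inj_eq polyC_inj); apply: contraTneq k0 => Xk1.
by have := size_polyXn {poly rat} k; rewrite Xk1 size_poly1 => -[<-].
Qed.

Lemma tofrac_denom_poly n : tofrac (denom_poly n) = fa * fq * qpoch (fq ^+ 2) (fq ^+ 2) n.
Proof. by rewrite !rmorphM rmorph_qpoch rmorphXn. Qed.

Lemma denom_poly_neq0 n : denom_poly n != 0.
Proof.
rewrite -tofrac_eq0 tofrac_denom_poly; apply: mulf_neq0 (mulf_neq0 fa_neq0 fq_neq0) _.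
by apply: qpoch_qq_neq0 => k k0; rewrite -exprM fqX_neq1 // muln_gt0.
Qed.

Lemma eqmodR_denom_bounded (A B : Kf) (P D : Rp) (g : Kf) :
  D != 0 -> (forall j, coprimeR (D ^+ j) P) -> denom_bounded D g ->
  A - B = tofrac P * g -> eqmodR A B P.
Proof.
move=> D0 coprimeDP [c [j gc]] ABg; exists c, (D ^+ j).
split; [exact: expf_neq0 | split; [exact: coprimeDP |]].
by rewrite ABg -mulrA tofracXn -gc mulfK // expf_neq0 // tofrac_eq0.
Qed.

Section BoundedTerms.
Variable n : nat.
Local Notation bounded := (denom_bounded (denom_poly n)).
Local Notation p := (fq ^+ 2).

Lemma bounded_fa : bounded fa. Proof. exact: denom_bounded_tofrac. Qed.
Lemma bounded_fq : bounded fq. Proof. exact: denom_bounded_tofrac. Qed.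
Lemma bounded_fx : bounded fx. Proof. exact: denom_bounded_tofrac. Qed.

Lemma bounded_p : bounded p. Proof. exact/denom_boundedX/bounded_fq. Qed.

Lemma bounded_fa_inv : bounded fa^-1.
Proof.
apply: (denom_bounded_inv fa_neq0 (v := fq * qpoch p p n)).
  by rewrite tofrac_denom_poly mulrA.
exact: denom_boundedM bounded_fq (denom_bounded_qpoch n bounded_p bounded_p).
Qed.

Lemma bounded_fq_inv : bounded fq^-1.
Proof.
apply: (denom_bounded_inv fq_neq0 (v := fa * qpoch p p n)).
  by rewrite tofrac_denom_poly mulrCA mulrA.
exact: denom_boundedM bounded_fa (denom_bounded_qpoch n bounded_p bounded_p).
Qed.

Lemma bounded_qpoch_inv k : (k <= n)%N -> bounded (qpoch p p k)^-1.
Proof.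
move=> kn; have p_not_root1 i : (0 < i)%N -> p ^+ i != 1.
  by move=> i0; rewrite -exprM fqX_neq1 // muln_gt0.
apply: (denom_bounded_inv (qpoch_qq_neq0 p_not_root1 k)
          (v := fa * fq * qpoch (p * p ^+ k) p (n - k))).
  by rewrite tofrac_denom_poly -{1}(subnKC kn) qpochD mulrCA.
have Bpk : bounded (p * p ^+ k) by apply: denom_boundedM bounded_p (denom_boundedX k bounded_p).
exact: denom_boundedM (denom_boundedM bounded_fa bounded_fq) (denom_bounded_qpoch _ Bpk bounded_p).
Qed.

Local Notation t := (fa + fa^-1).
Local Notation t0 := (fq ^+ n + (fq ^+ n)^-1).

Lemma bounded_pair_factor T i :
  bounded T -> bounded (1 - fq * p ^+ i * T + p * (p ^+ i) ^+ 2).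
Proof.
move=> BT; have Bpi := denom_boundedX i bounded_p.
apply: denom_boundedD (denom_boundedM bounded_p (denom_boundedX 2 Bpi)).
exact: denom_boundedB (denom_bounded1 _) (denom_boundedM (denom_boundedM bounded_fq Bpi) BT).
Qed.

Lemma bounded_pair_qpoch T k : bounded T -> bounded (pair_qpoch fq T k).
Proof.
move=> BT; apply: (subring_prod (denom_bounded1 _) (@denom_boundedM _ _)) => i.
exact: bounded_pair_factor.
Qed.

Lemma bounded_sym : bounded t.
Proof. exact: denom_boundedD bounded_fa bounded_fa_inv. Qed.

Lemma bounded_sym_qX : bounded t0.
Proof.
rewrite -exprVn.
exact: denom_boundedD (denom_boundedX n bounded_fq) (denom_boundedX n bounded_fq_inv).
Qed.

Let B0 := denom_bounded0 (denom_poly n).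
Let B1 := denom_bounded1 (denom_poly n).
Let BB := @denom_boundedB _ (denom_poly n).
Let BM := @denom_boundedM _ (denom_poly n).
Local Notation congr_sym := (congr_mod bounded (t - t0)).

Lemma congr_pair_qpoch k : congr_sym (pair_qpoch fq t k) (pair_qpoch fq t0 k).
Proof.
apply: (congr_mod_prod B0 B1 BB BM) => i.
- exact: bounded_pair_factor bounded_sym.
- exact: bounded_pair_factor bounded_sym_qX.
exists (- (fq * p ^+ i)); last exact: pair_qpoch_factor_sub.
exact: subring_opp B0 BB _ (BM bounded_fq (denom_boundedX i bounded_p)).
Qed.

Lemma congr_pair_sum (W : nat -> Kf) : (forall k, (k < n)%N -> bounded (W k)) ->
  congr_sym (\sum_(k < n) pair_qpoch fq t k * W k) (\sum_(k < n) pair_qpoch fq t0 k * W k).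
Proof.
move=> BW; apply: (congr_mod_sum B0 BB) => k.
apply: (congr_mod_mul B0 BB BM).
- exact: BW k (ltn_ord k).
- exact: bounded_pair_qpoch k bounded_sym_qX.
- exact: congr_pair_qpoch.
- exact: congr_mod_refl B0 _ _.
Qed.

Variable m : nat.
Hypothesis n_odd : n = m.*2.+1.

Lemma pair_sums_congr x : bounded x ->
  congr_sym
    (\sum_(k < n) pair_qpoch fq t k * ((qpoch p p k ^+ 2)^-1 * x ^+ k))
    ((-1) ^+ m / fq ^+ (2 * 'C(m.+1, 2)) *
     \sum_(k < n) pair_qpoch fq t k * ((qpoch p p k ^+ 2)^-1 * (fq ^+ (2 * k) * qpoch x p k))).
Proof.
move=> Bx.
have Binv k : (k < n)%N -> bounded (qpoch p p k ^+ 2)^-1.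
  by move=> kn; rewrite -exprVn; apply: denom_boundedX; apply/bounded_qpoch_inv/ltnW.
have BW2 k : (k < n)%N -> bounded ((qpoch p p k ^+ 2)^-1 * (fq ^+ (2 * k) * qpoch x p k)).
  move=> kn; apply: BM (Binv k kn) (BM (denom_boundedX _ bounded_fq) _).
  exact: denom_bounded_qpoch _ Bx bounded_p.
have Bsign : bounded ((-1) ^+ m / fq ^+ (2 * 'C(m.+1, 2))).
  apply: BM (denom_boundedX m (subring_opp B0 BB B1)) _.
  by rewrite -exprVn; apply: denom_boundedX bounded_fq_inv.
apply: (congr_mod_trans B0 BB
  (v := \sum_(k < n) pair_qpoch fq t0 k * ((qpoch p p k ^+ 2)^-1 * x ^+ k))).
  apply: (congr_pair_sum (W := fun k => (qpoch p p k ^+ 2)^-1 * x ^+ k)) => k kn.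
  exact: BM (Binv k kn) (denom_boundedX k Bx).
rewrite (pair_qpoch_transform fq_neq0 fqX_neq1 n_odd).
apply: (congr_mod_sym B0 BB); apply: (congr_mod_mul B0 BB BM _ Bsign).
- apply: (big_ind bounded B0 (subring_add B0 BB)) => k _.
  exact: BM (bounded_pair_qpoch k bounded_sym) (BW2 k (ltn_ord k)).
- exact: congr_mod_refl B0 _ _.
- exact: (congr_pair_sum (W := fun k => _ * (_ * qpoch x p k)) BW2).
Qed.

End BoundedTerms.

Lemma odd_sub1_half n : odd n -> n = ((n - 1)./2).*2.+1.
Proof.
move=> on; rewrite -[n in RHS](odd_double_half n) on add1n subn1 /= doubleK.
by rewrite odd_halfK // prednK // odd_gt0.
Qed.

Lemma double_bin2 m : (2 * 'C(m.+1, 2) = m.+1 * m)%N.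
Proof. by elim: m => // m IH; rewrite binS bin1 mulnDr IH; lia. Qed.

Lemma sqr_odd_sub1_div4 m : ((m.*2.+1 * m.*2.+1 - 1) %/ 4 = 2 * 'C(m.+1, 2))%N.
Proof.
have -> : (m.*2.+1 * m.*2.+1 - 1 = 4 * (2 * 'C(m.+1, 2)))%N.
  by rewrite double_bin2 -muln2; lia.
by rewrite mulKn.
Qed.

Lemma tofrac_theorem_modulus n :
  tofrac ((1 - pa * pq ^+ n) * (pa - pq ^+ n)) = (1 - fa * fq ^+ n) * (fa - fq ^+ n).
Proof. by rewrite tofracM !tofracB tofracM !tofracXn. Qed.

Theorem theorem4p2 (n : nat) (hn0 : (0 < n)%N) (hodd : odd n) :
  eqmodR
    (\sum_(k < n)
       qpoch (fa * fq) (fq ^+ 2) k * qpoch (fq / fa) (fq ^+ 2) k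
       / (qpoch (fq ^+ 2) (fq ^+ 2) k) ^+ 2 * fx ^+ k)
    ((-1) ^+ ((n - 1)./2) * fq ^- ((n * n - 1) %/ 4) *
     \sum_(k < n)
       qpoch (fa * fq) (fq ^+ 2) k * qpoch (fq / fa) (fq ^+ 2) k
       / (qpoch (fq ^+ 2) (fq ^+ 2) k) ^+ 2 * fq ^+ (2 * k)
       * qpoch fx (fq ^+ 2) k)
    ((1 - pa * pq ^+ n) * (pa - pq ^+ n)).
Proof.
have n_odd := odd_sub1_half hodd; set m := ((n - 1)./2)%N in n_odd *.
have -> : ((n * n - 1) %/ 4 = 2 * 'C(m.+1, 2))%N by rewrite n_odd sqr_odd_sub1_div4.
rewrite (sum_pair_qpochE _ _ _ fa_neq0) (sum_pair_qpochE_shifted _ _ _ fa_neq0).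
have [g Bg] := pair_sums_congr n_odd (bounded_fx n).
rewrite (sym_sub_qX n fa_neq0 fq_neq0) => ABg.
apply: (eqmodR_denom_bounded (g := - g / (fa * fq ^+ n))
          (denom_poly_neq0 n) (@coprimeR_denom_poly n)).
  apply: denom_boundedM (subring_opp (denom_bounded0 _) (@denom_boundedB _ _) Bg) _.
  rewrite invfM -exprVn.
  exact: denom_boundedM (bounded_fa_inv n) (denom_boundedX n (bounded_fq_inv n)).
by rewrite ABg tofrac_theorem_modulus !mulNr mulrN -mulrA [_^-1 * g]mulrC.
Qed.
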